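(* Let $I=(f_1,\ldots,f_r)\subset\mathbb{C}[x_1,\ldots,x_n]$ be an ideal generated by quasi-homogeneous polynomials (with respect to a common system of positive weights on $x_1,\ldots,x_n$), and let \[f_I(x_1,\ldots,x_n,y_1,\ldots,y_r)=\sum_{i=1}^r y_i f_i(x_1,\ldots,x_n).\] Then $f_I$ is a quasi-homogeneous polynomial (for suitable positive weights on the $y_i$), and its global Milnor fibre $f_I^{-1}(1)\subset\mathbb{C}^{n+r}$ is homotopy equivalent to $\mathbb{C}^n\setminus V(I)$, where $V(I)$ is the zero set of $I$.
   Context: A polynomial $g$ is quasi-homogeneous with respect to positive weights $w_1,\ldots,w_N$ if $g(t^{w_1}z_1,\ldots,t^{w_N}z_N)=t^d g(z)$ for some $d$; an ideal is quasi-homogeneous if generated by such polynomials for common weights. The global Milnor fibre of a quasi-homogeneous polynomial $g$ is $g^{-1}(1)$. *)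

From HB Require Import structures.
From mathcomp Require Import all_boot all_order all_algebra.
From mathcomp Require Import mpoly.
From mathcomp Require Import all_classical all_reals.
From mathcomp Require Import topology normedtype exp.
From mathcomp Require Import complex.

Set Implicit Arguments.
Unset Strict Implicit.
Unset Printing Implicit Defensive.

Import Order.TTheory GRing.Theory Num.Theory.
Import numFieldNormedType.Exports.
Local Open Scope classical_set_scope.
Local Open Scope ring_scope.
Local Open Scope complex_scope.

(* The complex numbers C = R[i] over the reals R, as a numClosedFieldType
   (so that it carries MathComp-Analysis's norm topology, |z| = complex modulus). *)
Definition Cplx (R : rcfType) : numClosedFieldType := R[i].

Definition ev (C : comNzRingType) (N : nat) (p : mpoly N C)
  (z : 'rV[C]_N) : C := meval (fun k => z ord0 k) p.

Definition var (C : comNzRingType) (N : nat) (k : 'I_N) : mpoly N C :=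
  mpolyX C (mnm1 k).

Definition quasi_homogeneous (R : realType) (N : nat) (w : 'I_N -> R) (d : R)
    (g : mpoly N (Cplx R)) : Prop :=
  forall t : R, 0 < t -> forall z : 'rV[Cplx R]_N,
    ev g (\row_k ((t `^ w k)%:C * z ord0 k : Cplx R)) = ((t `^ d)%:C : Cplx R) * ev g z.

(* f_I (x, y) = sum_i y_i f_i(x), a polynomial in the n + r variables
   x_1..x_n (indices lshift r j) and y_1..y_r (indices rshift n i). *)
Definition fI (C : comNzRingType) (n r : nat) (f : 'I_r -> mpoly n C)
  : mpoly (n + r) C :=
  \sum_(i < r) var C (rshift n i) *
     comp_mpoly [tuple var C (lshift r j) | j < n] (f i).

Definition catw (R : Type) (n r : nat) (w : 'I_n -> R) (v : 'I_r -> R)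
  (k : 'I_(n + r)) : R :=
  match fintype.split k with inl j => w j | inr i => v i end.

Definition milnor_fibre (C : comNzRingType) (N : nat) (g : mpoly N C)
  : set 'rV[C]_N := [set z | ev g z = 1].

Definition in_ideal (C : comNzRingType) (n r : nat)
  (f : 'I_r -> mpoly n C) (p : mpoly n C) : Prop :=
  exists g : 'I_r -> mpoly n C, p = \sum_(i < r) g i * f i.

Definition zero_set (C : comNzRingType) (n r : nat)
  (f : 'I_r -> mpoly n C) : set 'rV[C]_n :=
  [set z | forall p, in_ideal f p -> ev p z = 0].

Definition homotopic_on (R : realType) (X Y : topologicalType)
  (A : set X) (B : set Y) (f g : X -> Y) : Prop :=
  exists H : R * X -> Y,
    {within `[0%R, 1%R] `*` A, continuous H} /\
    (forall t x, `[0%R, 1%R]%classic t -> A x -> B (H (t, x))) /\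
    (forall x, A x -> H (0, x) = f x) /\
    (forall x, A x -> H (1, x) = g x).

Definition homotopy_equivalent (R : realType) (X Y : topologicalType)
  (A : set X) (B : set Y) : Prop :=
  exists (f : X -> Y) (g : Y -> X),
    {within A, continuous f} /\ (f @` A `<=` B) /\
    {within B, continuous g} /\ (g @` B `<=` A) /\
    homotopic_on R A A (g \o f) id /\ homotopic_on R B B (f \o g) id.

From HB Require Import structures.
From mathcomp Require Import all_boot all_order all_algebra.
From mathcomp Require Import mpoly.
From mathcomp Require Import all_classical all_reals.
From mathcomp Require Import topology normedtype exp.
From mathcomp Require Import complex.
From mathcomp Require Import lra ring.

Set Implicit Arguments.
Unset Strict Implicit.
Unset Printing Implicit Defensive.

Import Order.TTheory GRing.Theory Num.Theory.
Import numFieldNormedType.Exports.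
Local Open Scope classical_set_scope.
Local Open Scope ring_scope.

(* The projection (x, y) |-> x maps the Milnor fibre f_I = 1 onto C^n \ V(I), since
   sum_i y_i f_i(x) = 1 forces some f_i(x) != 0.  Over a point x of C^n \ V(I) the fibre
   is the affine hyperplane {y | sum_i y_i f_i(x) = 1}, and x |-> (x, conj f(x) / |f(x)|^2)
   is a continuous section of it.  Sliding y linearly to this section stays inside the
   hyperplane, so section o projection is homotopic to the identity of the fibre, while
   projection o section is the identity of C^n \ V(I).  Quasi-homogeneity: if f_i has
   degree d_i, giving y_i the weight D - d_i makes every term y_i f_i of degree D, and any
   D > max d_i makes these weights positive. *)

Section numField_continuity.
Variable K : numFieldType.

Lemma continuous_exprn k : continuous (fun x : K => x ^+ k).
Proof.
move=> x; elim: k => [|k /(continuousM cvg_id) IHk]; first exact: cst_continuous.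
by rewrite /continuous_at exprS; under eq_fun do rewrite exprS; exact: IHk.
Qed.

Lemma ev_continuous N (p : mpoly N K) : continuous (ev p).
Proof.
have -> : ev p = fun z => \sum_(m <- msupp p) p@_m * \prod_i z ord0 i ^+ m i.
  by apply/funext => z; rewrite /ev mevalE.
apply: continuous_big => [|m _]; first exact: add_continuous.
move=> z; apply: continuousM; first exact: cst_continuous.
move: z; apply: continuous_big => [|i _]; first exact: mul_continuous.
move=> z; apply: (@continuous_comp _ _ _ (fun y : 'rV[K]_N => y ord0 i) (fun c => c ^+ m i)).
  exact: coord_continuous.
exact: continuous_exprn.
Qed.

Lemma continuous_mx (X : topologicalType) m n (h : X -> 'M[K]_(m, n)) x :
  (forall i j, {for x, continuous (fun y => h y i j)}) -> {for x, continuous h}.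
Proof.
move=> hij A [P nbhsP PA].
have : \forall y \near x, forall ij : 'I_m * 'I_n, P ij.1 ij.2 (h y ij.1 ij.2).
  by apply: filter_forall => -[i j]; exact: hij.
by apply: filterS => y Py; apply: PA => i j; exact: (Py (i, j)).
Qed.

Lemma lsubmx_continuous m n1 n2 : continuous (@lsubmx K m n1 n2).
Proof.
move=> z; apply: continuous_mx => i j.
have -> : (fun y : 'M[K]_(m, n1 + n2) => lsubmx y i j) = fun y => y i (lshift n2 j).
  by apply/funext => y; rewrite mxE.
exact: coord_continuous.
Qed.

Lemma continuous_segment (V : normedModType K) (T : topologicalType)
    (c : T -> K) (a b : T -> V) x :
  {for x, continuous c} -> {for x, continuous a} -> {for x, continuous b} ->
  {for x, continuous (fun y => (1 - c y) *: a y + c y *: b y)}.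
Proof.
move=> cc ca cb; apply: continuousD; apply: continuousZ => //.
(* [fun y => 1 - c y] only unifies with the pointwise difference [cst 1 - c] up to conversion. *)
have c1 : {for x, continuous (cst (1 : K) - c)}.
  by apply: continuousB => //; exact: cst_continuous.
exact: c1.
Qed.

End numField_continuity.

Lemma conjC_continuous (K : numClosedFieldType) : continuous (fun z : K => z^*).
Proof.
move=> u A /(nbhs_ballP u^*)[e e0 eA].
apply/(nbhs_ballP u); exists e => // v uv; apply: eA.
by move: uv; rewrite /ball /= -rmorphB norm_conjC.
Qed.

Lemma conjC_ev_continuous (K : numClosedFieldType) N (p : mpoly N K) :
  continuous (fun z => (ev p z)^*).
Proof.
move=> z; apply: (@continuous_comp _ _ _ (ev p) (fun c : K => c^*)).
  exact: ev_continuous.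
exact: conjC_continuous.
Qed.

Lemma complex_real_continuous (R : rcfType) : continuous (fun t : R => t%:C%C : Cplx R).
Proof.
move=> u A /(nbhs_ballP (u%:C%C : Cplx R))[e e0 eA].
have {}e0 : 0 < e := e0.
apply/(nbhs_ballP u); exists (complex.Re e); first by move: e0; rewrite ltcE => /andP[].
move=> v uv; apply: eA.
move: uv; rewrite /ball /= -rmorphB normc_def /= expr0n /= addr0 sqrtr_sqr.
by move: e0; rewrite !ltcE /= => /andP[/eqP -> _] ->; rewrite eqxx.
Qed.

Lemma homotopic_on_id (R : realType) (X : topologicalType) (A : set X) (g : X -> X) :
  (forall x, A x -> g x = x) -> homotopic_on R A A g id.
Proof.
move=> gid; exists snd; split.
  by apply: continuous_subspaceT => p; exact: cvg_snd.
by split=> [t x _ //|]; split=> [x /gid ->|].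
Qed.

Section fI_evaluation.
Variables (C : comNzRingType) (n r : nat) (f : 'I_r -> mpoly n C).

Lemma ev_var N (k : 'I_N) (z : 'rV[C]_N) : ev (var C k) z = z ord0 k.
Proof. by rewrite /ev /var mevalXU. Qed.

Lemma ev_fI z : ev (fI f) z = \sum_i z ord0 (rshift n i) * ev (f i) (lsubmx z).
Proof.
rewrite /fI /ev raddf_sum /=; apply: eq_bigr => i _.
rewrite mevalM -/(ev _ _) ev_var comp_mpoly_meval; congr (_ * _).
by apply: meval_eq => k; rewrite tnth_mktuple -/(ev _ _) ev_var mxE.
Qed.

Lemma ev_fI_row_mx x y : ev (fI f) (row_mx x y) = \sum_i y ord0 i * ev (f i) x.
Proof. by rewrite ev_fI row_mxKl; apply: eq_bigr => i _; rewrite row_mxEr. Qed.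

Lemma ev_fI_affine z1 z2 (t : C) : lsubmx z1 = lsubmx z2 ->
  ev (fI f) ((1 - t) *: z1 + t *: z2) = (1 - t) * ev (fI f) z1 + t * ev (fI f) z2.
Proof.
move=> z12; rewrite !ev_fI linearD !linearZ /= -z12 -scalerDl subrK scale1r.
rewrite !mulr_sumr -big_split /=; apply: eq_bigr => i _.
by rewrite !mxE; ring.
Qed.

Lemma compl_zero_setP x : (~` zero_set f) x <-> exists i, ev (f i) x != 0.
Proof.
split=> [notV | [i fi_neq0] V_x].
  apply: contrapT => /forallNP fx0; apply: notV => _ [g ->].
  rewrite /ev raddf_sum big1 // => i _ /=.
  by move/negP/negPn/eqP: (fx0 i); rewrite mevalM /ev => ->; rewrite mulr0.
move/eqP: fi_neq0; apply; apply: V_x; exists (fun j => (j == i)%:R).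
by rewrite (bigD1 i) //= eqxx mul1r big1 ?addr0 // => j /negbTE ->; rewrite mul0r.
Qed.

End fI_evaluation.

Section milnor_fibre_retraction.
Variables (R : realType) (n r : nat) (f : 'I_r -> mpoly n (Cplx R)).
Local Notation C := (Cplx R).
Local Notation F := (milnor_fibre (fI f)).
Local Notation U := (~` zero_set f).

Definition fsqnorm (x : 'rV[C]_n) : C := \sum_i (ev (f i) x)^* * ev (f i) x.

Definition fibre_section (x : 'rV[C]_n) : 'rV[C]_(n + r) :=
  row_mx x (\row_i ((ev (f i) x)^* / fsqnorm x)).

Lemma fsqnorm_neq0 x : U x -> fsqnorm x != 0.
Proof.
case/compl_zero_setP => i fi_neq0; apply/negP => /eqP; rewrite /fsqnorm => S0.
have ge0 j : true -> 0 <= (ev (f j) x)^* * ev (f j) x by rewrite mulrC mul_conjC_ge0.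
move/eqP: (psumr_eq0P ge0 S0 (i:=i) isT).
by rewrite mulf_eq0 conjC_eq0 orbb (negbTE fi_neq0).
Qed.

Lemma fibre_section_in_fibre x : U x -> F (fibre_section x).
Proof.
move=> Ux; rewrite /milnor_fibre /= ev_fI_row_mx.
under eq_bigr do rewrite mxE mulrAC.
by rewrite -mulr_suml divff // fsqnorm_neq0.
Qed.

Lemma fibre_sectionK x : lsubmx (fibre_section x) = x.
Proof. exact: row_mxKl. Qed.

Lemma milnor_fibre_compl_zero_set z : F z -> U (lsubmx z).
Proof.
rewrite /milnor_fibre /= ev_fI => Fz; apply/compl_zero_setP.
apply: contrapT => /forallNP fz0; move: Fz; rewrite big1 => [/esym/eqP|i _].
  by rewrite oner_eq0.
by move/negP/negPn/eqP: (fz0 i) => ->; rewrite mulr0.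
Qed.

Lemma milnor_fibre_segment z1 z2 (t : C) : F z1 -> F z2 -> lsubmx z1 = lsubmx z2 ->
  F ((1 - t) *: z1 + t *: z2).
Proof.
by rewrite /milnor_fibre /= => Fz1 Fz2 /ev_fI_affine ->; rewrite Fz1 Fz2 !mulr1 subrK.
Qed.

Lemma fsqnorm_continuous : continuous fsqnorm.
Proof.
apply: continuous_big => [|i _]; first exact: add_continuous.
move=> x; apply: (@continuousM C _ (fun y => (ev (f i) y)^*) (ev (f i))).
  exact: conjC_ev_continuous.
exact: ev_continuous.
Qed.

Lemma fibre_section_continuous x : U x -> {for x, continuous fibre_section}.
Proof.
move=> Ux; apply: continuous_mx => i j; rewrite -(splitK j).
case: (fintype.split j) => k /=.
  have -> : (fun y => fibre_section y i (lshift r k)) = fun y => y i k.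
    by apply/funext => y; rewrite row_mxEl.
  exact: coord_continuous.
have -> : (fun y => fibre_section y i (rshift n k)) = fun y => (ev (f k) y)^* / fsqnorm y.
  by apply/funext => y; rewrite row_mxEr mxE.
apply: (@continuousM C _ (fun y => (ev (f k) y)^*) (fun y => (fsqnorm y)^-1)).
  exact: conjC_ev_continuous.
apply: continuousV; first exact: fsqnorm_neq0.
exact: fsqnorm_continuous.
Qed.

Definition fibre_homotopy (p : R * 'rV[C]_(n + r)) : 'rV[C]_(n + r) :=
  (1 - p.1%:C%C) *: fibre_section (lsubmx p.2) + p.1%:C%C *: p.2.

Lemma fibre_homotopy_continuous t z : U (lsubmx z) ->
  {for (t, z), continuous fibre_homotopy}.
Proof.
move=> Uz; apply: continuous_segment.
- apply: (@continuous_comp _ _ _ fst (fun s : R => s%:C%C : C)); first exact: cvg_fst.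
  exact: complex_real_continuous.
- apply: (@continuous_comp _ _ _ (fun p : R * 'rV[C]_(n + r) => lsubmx p.2) fibre_section).
    apply: (@continuous_comp _ _ _ snd (@lsubmx C 1 n r)); first exact: cvg_snd.
    exact: lsubmx_continuous.
  exact: fibre_section_continuous.
- exact: cvg_snd.
Qed.

Lemma milnor_fibre_homotopy_equivalent : homotopy_equivalent R F U.
Proof.
exists (@lsubmx C 1 n r), fibre_section; split.
  by apply: continuous_subspaceT; exact: lsubmx_continuous.
split; first by move=> _ [z Fz <-]; exact: milnor_fibre_compl_zero_set.
split.
  by apply: continuous_in_subspaceT => x; rewrite inE; exact: fibre_section_continuous.
split; first by move=> _ [x Ux <-]; exact: fibre_section_in_fibre.
split; last by apply: homotopic_on_id => x _; exact: fibre_sectionK.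
exists fibre_homotopy; split.
  apply: continuous_in_subspaceT => -[t z]; rewrite inE => -[_ Fz].
  exact/fibre_homotopy_continuous/milnor_fibre_compl_zero_set.
split.
  move=> t z _ Fz; have Ux := milnor_fibre_compl_zero_set Fz.
  by apply: milnor_fibre_segment => //; [exact: fibre_section_in_fibre | exact: fibre_sectionK].
split=> z _; rewrite /fibre_homotopy /=.
  by rewrite rmorph0 subr0 scale1r scale0r addr0.
by rewrite rmorph1 subrr scale0r scale1r add0r.
Qed.

End milnor_fibre_retraction.

Section weights.
Variables (T : Type) (n r : nat) (w : 'I_n -> T) (v : 'I_r -> T).

Lemma catw_lshift k : catw w v (lshift r k) = w k.
Proof. by rewrite /catw (unsplitK (inl _ k : 'I_n + 'I_r)). Qed.

Lemma catw_rshift k : catw w v (rshift n k) = v k.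
Proof. by rewrite /catw (unsplitK (inr _ k : 'I_n + 'I_r)). Qed.

End weights.

Lemma exists_strict_upper_bound (K : realDomainType) m (d : 'I_m -> K) :
  exists D, forall i, d i < D.
Proof.
exists (1 + \sum_i `|d i|) => i; rewrite (bigD1 i) //=.
have : 0 <= \sum_(j | j != i) `|d j| by apply: sumr_ge0.
have := ler_norm (d i).
lra.
Qed.

Lemma fI_quasi_homogeneous (R : realType) n r (f : 'I_r -> mpoly n (Cplx R))
    (w : 'I_n -> R) (d : 'I_r -> R) (D : R) :
  (forall i, quasi_homogeneous w (d i) (f i)) ->
  quasi_homogeneous (catw w (fun i => D - d i)) D (fI f).
Proof.
move=> qh t t_gt0 z; rewrite !ev_fI mulr_sumr; apply: eq_bigr => i _.
set v := fun i => D - d i.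
have -> : lsubmx (\row_k ((t `^ catw w v k)%:C * z ord0 k : Cplx R)%C)
    = \row_k ((t `^ w k)%:C * lsubmx z ord0 k : Cplx R)%C.
  by apply/rowP => k; rewrite !mxE catw_lshift.
rewrite qh // mxE catw_rshift.
have -> : t `^ D = t `^ v i * t `^ d i by rewrite -powRD ?subrK // lt0r_neq0 ?implybT.
by rewrite rmorphM /=; ring.
Qed.

Theorem mainTheorem2 (R : realType) (n r : nat)
    (f : 'I_r -> mpoly n (Cplx R)) (w : 'I_n -> R) :
  (forall j, 0 < w j) ->
  (forall i, exists d : R, quasi_homogeneous w d (f i)) ->
  (exists (v : 'I_r -> R) (D : R),
      (forall i, 0 < v i) /\ quasi_homogeneous (catw w v) D (fI f)) /\
  homotopy_equivalent R (milnor_fibre (fI f)) (~` zero_set f).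
Proof.
move=> _ /boolp.choice[d qh_f]; split; last exact: milnor_fibre_homotopy_equivalent.
have [D d_lt_D] := exists_strict_upper_bound d.
exists (fun i => D - d i), D; split; last exact: fI_quasi_homogeneous.
by move=> i; rewrite subr_gt0.
Qed.
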